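(* Let $F\subsetneq K$ be fields of characteristic $t$, with $F$ a proper nonempty subfield of $K$. Let $p(x)=\sum_{k=0}^{n}a_k x^k\in K[x]$ be non-constant with $a_n\neq 0$, and let $q(x)=\sum_{j=0}^{m}b_j x^j\in K[x]\setminus F[x]$ with $b_m\neq 0$. Suppose $a_n,b_m\in F$ and $b_j\notin F$ for some $j\geq 1$. If $t\nmid n$, then $p\circ q\notin F[x]$ and $D_F(p\circ q)=D_F(q)$.
   Context: For sets $F\subset K$ and $p(x)=\sum_{k=0}^{n}a_kx^k\in K[x]$ with $a_n\neq 0$, the $F$ deficit $D_F(p)$ is defined as follows: if $p\in K[x]\setminus F[x]$, then $D_F(p)=n-\max\{0\le k\le n: a_k\notin F\}$; if $p\in F[x]$, then $D_F(p)=n$. Here $F[x]$ denotes the set of polynomials with all coefficients in $F$. *)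

From mathcomp Require Import all_boot all_order all_algebra.
Set Implicit Arguments. Unset Strict Implicit. Unset Printing Implicit Defensive.
Import GRing.Theory.
Local Open Scope ring_scope.

Definition deficit (K : fieldType) (F : {pred K}) (p : {poly K}) : nat :=
  if p \is a polyOver F then (size p).-1
  else ((size p).-1 - \max_(k < size p | (p`_k)%R \notin F) (k : nat))%N.

From HB Require Import structures.
From mathcomp Require Import all_boot all_order all_algebra.
From mathcomp Require Import zify.
Set Implicit Arguments. Unset Strict Implicit. Unset Printing Implicit Defensive.
Import GRing.Theory.
Local Open Scope ring_scope.

(* Let r be the largest index with q_r outside F, so 0 < r < m = deg q, and
   split q = q1 + low, where low keeps the terms of degree <= r; then q1 lies in
   F[x] and has the degree and leading coefficient b_m of q.  Above degree
   (n-1)m only the top term a_n q^n of p \Po q contributes, and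
   q^n - q1^n = low * \sum_i q^(n-1-i) q1^i has degree (n-1)m + r with leading
   coefficient q_r * n b_m^(n-1), which is outside F as n != 0 in K.  So the
   last coefficient of p \Po q outside F has degree nm - (m - r). *)

Lemma size_lead_coef_sum_eq (R : nzRingType) n (P : 'I_n -> {poly R}) d c :
    (forall i, size (P i) <= d.+1)%N -> (forall i, (P i)`_d = c) ->
    n%:R * c != 0 ->
  size (\sum_i P i) = d.+1 /\ lead_coef (\sum_i P i) = n%:R * c.
Proof.
move=> sP cP nc0.
have coefd : (\sum_i P i)`_d = n%:R * c.
  by rewrite coef_sum (eq_bigr _ (fun i _ => cP i)) sumr_const card_ord mulr_natl.
have sS : size (\sum_i P i) = d.+1.
  apply/eqP; rewrite eqn_leq ltnNge; apply/andP; split.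
    by apply: leq_trans (size_sum _ _ _) _; apply/bigmax_leqP => i _.
  by apply: contra nc0 => sd; rewrite -coefd nth_default.
by rewrite lead_coefE sS.
Qed.

Lemma size_lead_coef_subXX (R : idomainType) (A B : {poly R}) (n : nat) :
    size A = size B -> lead_coef A = lead_coef B -> A != B -> n%:R != 0 :> R ->
  size (A ^+ n - B ^+ n) = (size (A - B)%R + (size A).-1 * n.-1)%N /\
  lead_coef (A ^+ n - B ^+ n) = lead_coef (A - B) * (n%:R * lead_coef A ^+ n.-1).
Proof.
move=> sAB lAB neqAB n0.
have A0 : A != 0.
  apply: contraNneq neqAB => A0; move/eqP: sAB.
  by rewrite A0 size_poly0 eq_sym size_poly_eq0 => /eqP ->.
have B0 : B != 0 by rewrite -size_poly_eq0 -sAB size_poly_eq0.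
have AB0 : A - B != 0 by rewrite subr_eq0.
pose d := ((size A).-1 * n.-1)%N.
have le_i (i : 'I_n) : (i <= n.-1)%N by have := ltn_ord i; lia.
have size_term (i : 'I_n) : size (A ^+ (n.-1 - i) * B ^+ i) = d.+1.
  rewrite size_mul ?expf_neq0 //.
  rewrite -[size (A ^+ _)]prednK ?size_poly_gt0 ?expf_neq0 //.
  rewrite -[size (B ^+ _)]prednK ?size_poly_gt0 ?expf_neq0 //.
  by rewrite !size_exp -sAB addnS addSn -mulnDr subnK.
have [sS lS] : size (\sum_(i < n) A ^+ (n.-1 - i) * B ^+ i) = d.+1 /\
    lead_coef (\sum_(i < n) A ^+ (n.-1 - i) * B ^+ i) = n%:R * lead_coef A ^+ n.-1.
  apply: size_lead_coef_sum_eq => [j|j|].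
  - by rewrite size_term.
  - rewrite -[d]/(d.+1.-1) -(size_term j) -lead_coefE lead_coefM !lead_coef_exp.
    by rewrite -lAB -exprD subnK.
  - by rewrite mulf_neq0 // expf_neq0 // lead_coef_eq0.
have S0 : \sum_(i < n) A ^+ (n.-1 - i) * B ^+ i != 0 by rewrite -size_poly_eq0 sS.
by rewrite subrXX size_mul // lead_coefM lS sS addnS.
Qed.

Lemma coef_comp_poly_high (R : nzSemiRingType) (p q : {poly R}) d :
    ((size p).-2 * (size q).-1 < d)%N ->
  (p \Po q)`_d = lead_coef p * (q ^+ (size p).-1)`_d.
Proof.
move=> hd; rewrite coef_comp_poly lead_coefE.
case sp: (size p) hd => [|n] hd; first by rewrite big_ord0 nth_default ?mul0r ?sp.
rewrite big_ord_recr big1 => [|i _]; first by rewrite /= add0r.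
rewrite [(q ^+ i)`_d]nth_default ?mulr0 //.
apply: leq_trans (size_poly_exp_leq q i) _; apply: leq_ltn_trans hd.
by rewrite mulnC leq_mul //; have := ltn_ord i; lia.
Qed.

Lemma natr_neq0_notdvd_pchar (R : idomainType) n :
  (0 < n)%N -> (forall t, t \in [pchar R] -> ~~ (t %| n)%N) -> n%:R != 0 :> R.
Proof.
move=> n_gt0 ndvd; apply/negP => n0.
have [t ht] := natf0_pchar n_gt0 n0.
by move: (ndvd t ht); rewrite (dvdn_pcharf ht) n0.
Qed.

Section Subfield.
Variables (K : fieldType) (F : {pred K}).
Hypothesis F_subfield : divring_closed F.
HB.instance Definition _ := GRing.isDivringClosed.Build K F F_subfield.

Lemma coef_notin_lt_size (q : {poly K}) k : q`_k \notin F -> (k < size q)%N.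
Proof. by rewrite ltnNge; apply: contra => /(nth_default 0) ->; rewrite rpred0. Qed.

Lemma exists_last_coef_notin (q : {poly K}) :
    q \isn't a polyOver F ->
  exists2 r, q`_r \notin F & forall k, (r < k)%N -> q`_k \in F.
Proof.
move=> qF.
have /existsP [i qi] : [exists i : 'I_(size q), q`_i \notin F].
  apply: contraR qF => /existsPn allF; apply/polyOverP => k.
  case: (ltnP k (size q)) => [lt_kq | le_qk]; last by rewrite nth_default ?rpred0.
  by have := allF (Ordinal lt_kq); rewrite negbK.
have [r qr maxr] := @ex_maxnP (fun k => q`_k \notin F) (size q)
  (ex_intro _ (i : nat) qi) (fun k qk => ltnW (coef_notin_lt_size qk)).
by exists r => // k; apply: contraTT => /maxr; rewrite leqNgt.
Qed.

Lemma deficit_last_coef_notin (q : {poly K}) r :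
    q`_r \notin F -> (forall k, (r < k)%N -> q`_k \in F) ->
  deficit F q = ((size q).-1 - r)%N.
Proof.
move=> qr highF.
have qF : q \isn't a polyOver F by apply: contra qr => /polyOverP.
rewrite /deficit (negbTE qF); congr (_ - _)%N; apply/eqP; rewrite eqn_leq.
apply/andP; split.
  by apply/bigmax_leqP => i qi; rewrite leqNgt; apply: contra qi; apply: highF.
exact: (@leq_bigmax_cond _ _ _ (Ordinal (coef_notin_lt_size qr))).
Qed.

Lemma polyOver_sub_take_poly (q : {poly K}) r :
  (forall k, (r <= k)%N -> q`_k \in F) -> q - take_poly r q \is a polyOver F.
Proof.
move=> highF; apply/polyOverP => k; rewrite coefB coef_take_poly.
by case: ltnP => hk; [rewrite subrr rpred0 | rewrite subr0 highF].
Qed.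

Lemma comp_poly_last_coef_notin (p q : {poly K}) r :
    (1 < size p)%N -> ((size p).-1)%:R != 0 :> K ->
    lead_coef p \in F -> lead_coef q \in F ->
    (0 < r)%N -> q`_r \notin F -> (forall k, (r < k)%N -> q`_k \in F) ->
  let N := ((size p).-2 * (size q).-1 + r)%N in
  (p \Po q)`_N \notin F /\ forall k, (N < k)%N -> (p \Po q)`_k \in F.
Proof.
move=> p_gt1 n0 lpF lqF r_gt0 qr highF N.
set n := (size p).-1 in n0 N *; set m := (size q).-1 in N *.
have q0 : q != 0 by apply: contraNneq qr => ->; rewrite coef0 rpred0.
have p0 : p != 0 by rewrite -size_poly_eq0 -lt0n ltnW.
have size_q : size q = m.+1 by rewrite prednK // size_poly_gt0.
have r_lt_m : (r < m)%N.
  have := coef_notin_lt_size qr; rewrite size_q ltnS.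
  rewrite leq_eqVlt => /orP [/eqP r_eq_m | //].
  by move: qr; rewrite r_eq_m -lead_coefE lqF.
set low := take_poly r.+1 q; set q1 := q - low.
have low_r : low`_r = q`_r by rewrite coef_take_poly ltnSn.
have size_low : size low = r.+1.
  apply/anti_leq; rewrite size_take_poly /= ltnNge; apply: contra qr => size_le.
  by rewrite -low_r nth_default ?rpred0.
have lead_low : lead_coef low = q`_r by rewrite lead_coefE size_low.
have low_lt_q : (size low < size q)%N by rewrite size_low size_q.
have size_q1 : size q1 = size q by rewrite size_addl // size_opp.
have lead_q1 : lead_coef q1 = lead_coef q by rewrite lead_coefDl // size_opp.
have q_sub_q1 : q - q1 = low by rewrite subKr.
have q_neq_q1 : q != q1 by rewrite -subr_eq0 q_sub_q1 -size_poly_eq0 size_low.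
have [size_diff lead_diff] :=
  size_lead_coef_subXX (esym size_q1) (esym lead_q1) q_neq_q1 n0.
rewrite q_sub_q1 size_low lead_low -/m in size_diff lead_diff.
have {}size_diff : size (q ^+ n - q1 ^+ n) = N.+1 by rewrite size_diff addSn addnC mulnC.
set c := n%:R * lead_coef q ^+ n.-1 in lead_diff.
have cF : c \in F by rewrite rpredM ?rpred_nat ?rpredX.
have c0 : c != 0 by rewrite mulf_neq0 ?expf_neq0 ?lead_coef_eq0.
have q1nF : q1 ^+ n \is a polyOver F by rewrite rpredX ?polyOver_sub_take_poly.
have coef_pq k : (N <= k)%N ->
    (p \Po q)`_k = lead_coef p * ((q1 ^+ n)`_k + (q ^+ n - q1 ^+ n)`_k).
  move=> hk; rewrite -coefD addrC subrK coef_comp_poly_high //; apply: leq_trans hk.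
  by rewrite -[X in (X < _)%N]addn0 ltn_add2l.
split=> [|k hk].
  rewrite coef_pq // (rpredMl _ lpF) ?unitfE ?lead_coef_eq0 //.
  rewrite (rpredDl _ (polyOverP q1nF N)) -[N]/(N.+1.-1) -size_diff -lead_coefE.
  by rewrite lead_diff (rpredMr _ cF) ?unitfE.
have diff_k : (q ^+ n - q1 ^+ n)`_k = 0 by rewrite nth_default // size_diff.
rewrite coef_pq ?diff_k ?addr0; last exact: ltnW hk.
exact: rpredM lpF (polyOverP q1nF k).
Qed.

End Subfield.

Theorem theorem27 (K : fieldType) (F : {pred K})
  (HFsub : divring_closed F)          (* F is a subfield of K *)
  (HFproper : exists x : K, x \notin F)
  (p q : {poly K})
  (Hp : (1 < size p)%N)               (* p non-constant *)
  (Hq : q \isn't a polyOver F)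
  (Hlp : lead_coef p \in F) (Hlq : lead_coef q \in F)
  (Hj : exists2 j : nat, (1 <= j)%N & q`_j \notin F)
  (Hchar : forall t : nat, t \in [pchar K] -> ~~ (t %| (size p).-1)%N) :
  (p \Po q) \isn't a polyOver F /\ deficit F (p \Po q) = deficit F q.
Proof.
have [r qr highF] := exists_last_coef_notin HFsub Hq.
have r_gt0 : (0 < r)%N.
  have [j j_gt0 qj] := Hj; apply: leq_trans j_gt0 _.
  by rewrite leqNgt; apply: contra qj; apply: highF.
have n_gt0 : (0 < (size p).-1)%N by rewrite -subn1 subn_gt0.
have n0 := natr_neq0_notdvd_pchar n_gt0 Hchar.
have [pqN pq_high] := comp_poly_last_coef_notin HFsub Hp n0 Hlp Hlq r_gt0 qr highF.
split; first by apply: contra pqN => /polyOverP; apply.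
rewrite (deficit_last_coef_notin HFsub pqN pq_high).
rewrite (deficit_last_coef_notin HFsub qr highF) size_comp_poly.
by rewrite -[X in (X * _)%N](prednK n_gt0) mulSnr subnDl.
Qed.
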